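(* The reflection map $r:(\mathcal G^n)^{\circ}\to\mathcal G^n$ on the $B_n$-groupoid $\mathcal G^n$ is a fully faithful functor.
   Context: $G$ is a finite group with identity $e$. $B_n$ (generators $b_1,\dots,b_{n-1}$) acts on $G^n$ by $b_i(\boldsymbol\gamma)=(\gamma_1,\dots,\gamma_{i-1},\gamma_i\gamma_{i+1}\gamma_i^{-1},\gamma_i,\gamma_{i+2},\dots,\gamma_n)$. For $b\in B_n$ and $\boldsymbol\gamma\in G^n$ there is an associated element $b_{\boldsymbol\gamma}\in G^n\rtimes S_n$ ($G^n\rtimes S_n$ acting on $G^n$ by componentwise conjugation and permutation of positions), determined by $b_{i,\boldsymbol\gamma}=((e,\dots,e,\gamma_i,e,\dots,e),(i,i+1))$ ($\gamma_i$ in slot $i$) and $(bb')_{\boldsymbol\gamma}=b_{b'\boldsymbol\gamma}b'_{\boldsymbol\gamma}$; it acts on $\boldsymbol\gamma$ as $b$ does. The $B_n$-groupoid $\mathcal G^n$ has objects $G^n$ and morphisms $\mathrm{hom}(\boldsymbol\gamma_1,\boldsymbol\gamma_2)=\{b_{\boldsymbol\gamma_1}:b\in B_n,\ b\boldsymbol\gamma_1=\boldsymbol\gamma_2\}$, composed by multiplication in $G^n\rtimes S_n$. The reflection map is the functor $r:(\mathcal G^n)^\circ\to\mathcal G^n$ (from the opposite groupoid) given on objects by $r(\gamma_1,\dots,\gamma_n)=(\gamma_n^{-1},\dots,\gamma_1^{-1})$ and on morphisms by sending $b_{i,\boldsymbol\gamma}$ (viewed as an arrow $b_i\boldsymbol\gamma\to\boldsymbol\gamma$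 of the opposite groupoid) to $b_{n-i,r(b_i\boldsymbol\gamma)}:r(b_i\boldsymbol\gamma)\to r(\boldsymbol\gamma)$, extended to composites (this is well defined). *)

From HB Require Import structures.
From mathcomp Require Import all_boot all_fingroup.
Set Implicit Arguments. Unset Strict Implicit. Unset Printing Implicit Defensive.

(* Conventions:
   - objects of G^n are finite functions 'I_n -> gT (positions 0..n-1);
   - the generator b_{j+1} (1 <= j+1 <= n-1) is indexed by j : 'I_n.-1 and
     acts on positions lo j = j and hi j = j+1;
   - an element of B_n is represented by a word in the generators and their
     inverses: (true, j) = b_{j+1}, (false, j) = b_{j+1}^{-1}; the word
     [:: x1; ...; xk] stands for the product x1 * ... * xk;
   - an element of G^n >< S_n is a pair (g, p) with p the permutation of
     positions used as a "pullback": (g,p) acts by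
        ((g,p).gamma)_k = g_k * gamma_(p k) * g_k^-1,
     and the product is (g,p)(h,q) = (k |-> g_k * h_(p k), p * q)
     (mathcomp's p * q is "p then q").  This is the semidirect product
     G^n >< S_n (via sigma |-> p = sigma^-1). *)

Local Open Scope group_scope.

Section Braid.
Variables (gT : finGroupType) (n : nat).

Definition obj := {ffun 'I_n -> gT}.
Definition sd := ({ffun 'I_n -> gT} * {perm 'I_n})%type.
Definition word := seq (bool * 'I_n.-1).

Definition lo (j : 'I_n.-1) : 'I_n := widen_ord (leq_pred n) j.
Lemma hi_proof (j : 'I_n.-1) : j.+1 < n.
Proof. by rewrite -ltn_predRL. Qed.
Definition hi (j : 'I_n.-1) : 'I_n := Ordinal (hi_proof j).

Definition bact (j : 'I_n.-1) (x : obj) : obj :=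
  [ffun k => if k == lo j then x (lo j) * x (hi j) * (x (lo j))^-1
             else if k == hi j then x (lo j) else x k].
Definition bact_inv (j : 'I_n.-1) (x : obj) : obj :=
  [ffun k => if k == lo j then x (hi j)
             else if k == hi j then (x (hi j))^-1 * x (lo j) * x (hi j)
             else x k].

Definition letact (l : bool * 'I_n.-1) (x : obj) : obj :=
  if l.1 then bact l.2 x else bact_inv l.2 x.
Definition wact (w : word) (x : obj) : obj := foldr letact x w.

Definition sd1 : sd := ([ffun=> 1], 1%g).
Definition sdmul (a b : sd) : sd :=
  ([ffun k => a.1 k * b.1 (a.2 k)], (a.2 * b.2)%g).
Definition sdinv (a : sd) : sd :=
  ([ffun m => (a.1 ((a.2)^-1%g m))^-1], ((a.2)^-1)%g).

Definition bsd (j : 'I_n.-1) (x : obj) : sd :=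
  ([ffun k => if k == lo j then x (lo j) else 1], tperm (lo j) (hi j)).

(* letter's element: b_gamma for b = b_{j+1}^{+-1}, using
   (b^{-1})_gamma = (b_{b^{-1} gamma})^{-1} *)
Definition letsd (l : bool * 'I_n.-1) (x : obj) : sd :=
  if l.1 then bsd l.2 x else sdinv (bsd l.2 (bact_inv l.2 x)).

(* (b b')_gamma = b_{b' gamma} b'_gamma *)
Fixpoint wsd (w : word) (x : obj) : sd :=
  if w is l :: w' then sdmul (letsd l (wact w' x)) (wsd w' x) else sd1.

(* morphisms of the B_n-groupoid: hom(a, b) = {w_a : w a = b} *)
Definition homP (a b : obj) (m : sd) (w : word) : bool :=
  (wact w a == b) && (wsd w a == m).
Definition is_hom (a b : obj) (m : sd) : Prop := exists w, homP a b m w.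

Definition robj (x : obj) : obj := [ffun k => (x (rev_ord k))^-1].

(* b_i^{+-1} |-> b_{n-i}^{+-1}, order reversed (contravariance) *)
Definition rword (w : word) : word :=
  rev (map (fun l : bool * 'I_n.-1 => (l.1, rev_ord l.2)) w).

(* reflection on morphisms: a morphism m = w_a : a -> b of G^n (an arrow
   b -> a of the opposite groupoid) is sent to (rword w)_{r b} : r b -> r a,
   where w is any word representing m (the paper asserts well-definedness;
   here a word is chosen). *)
Definition rmor (a b : obj) (m : sd) (H : is_hom a b m) : sd :=
  wsd (rword (xchoose H)) (robj b).

End Braid.

From mathcomp Require Import all_boot all_fingroup zify.
Set Implicit Arguments. Unset Strict Implicit. Unset Printing Implicit Defensive.
Local Open Scope group_scope.

(* The reflection acts on G^n >< S_n by the anti-automorphism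
   [sdrefl m = rho m^-1 rho], [rho] reversing positions.  Reflecting a word
   letter by letter turns [w] with [w a = b] into [rword w] with
   [rword w (r b) = r a], and since [sdrefl] reverses products,
   [(rword w)_(r b) = sdrefl (w_a)].  So [r] sends a morphism [m] to
   [sdrefl m] whichever word represents it; [sdrefl] is an involution and
   reflected words of [hom (r b) (r a)] lie in [hom a b], so [r] is bijective
   on hom-sets. *)

Section Reflection.
Variables (gT : finGroupType) (n : nat).
Implicit Types (x : obj gT n) (j : 'I_n.-1) (k : 'I_n) (A B C : sd gT n).

Lemma rev_ord_lo j : rev_ord (lo (rev_ord j)) = hi j.
Proof. by apply: val_inj => /=; have := ltn_ord j; lia. Qed.

Lemma rev_ord_hi j : rev_ord (hi (rev_ord j)) = lo j.
Proof. by apply: val_inj => /=; have := ltn_ord j; lia. Qed.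

Lemma lo_eq_hi j : (lo j == hi j) = false.
Proof. by apply/negbTE/eqP => /(congr1 val) /=; lia. Qed.

Lemma hi_eq_lo j : (hi j == lo j) = false.
Proof. by rewrite eq_sym lo_eq_hi. Qed.

Lemma eq_lo_rev j k : (k == lo (rev_ord j)) = (rev_ord k == hi j).
Proof. by rewrite -rev_ord_lo (inj_eq rev_ord_inj). Qed.

Lemma eq_hi_rev j k : (k == hi (rev_ord j)) = (rev_ord k == lo j).
Proof. by rewrite -rev_ord_hi (inj_eq rev_ord_inj). Qed.

Lemma bactK j : cancel (@bact gT n j) (bact_inv j).
Proof.
move=> x; apply/ffunP => k; rewrite !ffunE !eqxx ?lo_eq_hi ?hi_eq_lo.
case: eqP => [->|_] //; case: eqP => [->|_] //.
by rewrite !mulgA mulVg mul1g mulgKV.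
Qed.

Lemma bact_invK j : cancel (@bact_inv gT n j) (bact j).
Proof.
move=> x; apply/ffunP => k; rewrite !ffunE !eqxx ?lo_eq_hi ?hi_eq_lo.
case: eqP => [->|_]; first by rewrite !mulgA mulgV mul1g mulgK.
by case: eqP => [->|_].
Qed.

Lemma robjK : involutive (@robj gT n).
Proof. by move=> x; apply/ffunP => k; rewrite !ffunE rev_ordK invgK. Qed.

Lemma robj_bact j x : robj (bact j x) = bact_inv (rev_ord j) (robj x).
Proof.
apply/ffunP => k; rewrite !ffunE eq_lo_rev eq_hi_rev rev_ord_lo rev_ord_hi.
have [->|_] := eqVneq (rev_ord k) (lo j).
  by rewrite ?hi_eq_lo ?lo_eq_hi !invMg invgK mulgA.
by case: ifP.
Qed.

Lemma robj_bact_inv j x : robj (bact_inv j x) = bact (rev_ord j) (robj x).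
Proof. by rewrite -{2}(bact_invK j x) robj_bact bact_invK. Qed.

Definition rletter (l : bool * 'I_n.-1) : bool * 'I_n.-1 := (l.1, rev_ord l.2).

Lemma rword_cons l (w : word n) : rword (l :: w) = rcons (rword w) (rletter l).
Proof. by rewrite /rword /= rev_cons. Qed.

Lemma letact_robj l x : letact (rletter l) (robj (letact l x)) = robj x.
Proof.
case: l => [[] j]; rewrite /letact /=.
  by rewrite robj_bact bact_invK.
by rewrite robj_bact_inv bactK.
Qed.

Lemma wact_cat (u v : word n) x : wact u (wact v x) = wact (u ++ v) x.
Proof. by rewrite /wact foldr_cat. Qed.

Lemma wact_rword (w : word n) x : wact (rword w) (robj (wact w x)) = robj x.
Proof.
elim: w => [|l w IHw] //=.
by rewrite rword_cons -cats1 -wact_cat /= letact_robj.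
Qed.

Lemma sdP A B : (forall k, A.1 k = B.1 k) -> (forall k, A.2 k = B.2 k) -> A = B.
Proof.
by case: A B => a p [b q] /= eq_ab eq_pq; congr pair; [apply/ffunP|apply/permP].
Qed.

Lemma sdmulA A B C : sdmul (sdmul A B) C = sdmul A (sdmul B C).
Proof. by apply: sdP => k /=; rewrite ?ffunE /= ?ffunE ?mulgA ?permM. Qed.

Lemma sdmul1 A : sdmul A (sd1 gT n) = A.
Proof. by apply: sdP => k /=; rewrite ?ffunE ?mulg1 ?ffunE ?mulg1. Qed.

Lemma sd1mul A : sdmul (sd1 gT n) A = A.
Proof. by apply: sdP => k /=; rewrite ?ffunE ?mul1g ?perm1. Qed.

Lemma sdinvM A B : sdinv (sdmul A B) = sdmul (sdinv B) (sdinv A).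
Proof. by apply: sdP => k /=; rewrite ?ffunE /= ?ffunE ?invMg ?permM ?permKV. Qed.

Lemma sdinvK : involutive (@sdinv gT n).
Proof. by move=> A; apply: sdP => k /=; rewrite ?ffunE /= ?invgK ?permK. Qed.

Definition rho : {perm 'I_n} := perm (@rev_ord_inj n).

Lemma rhoE k : rho k = rev_ord k.
Proof. by rewrite permE. Qed.

Lemma rhoV : rho^-1 = rho.
Proof.
apply/eqP; rewrite eq_invg_mul; apply/eqP/permP => k.
by rewrite permM perm1 !rhoE rev_ordK.
Qed.

Definition sdrev A : sd gT n := ([ffun k => A.1 (rev_ord k)], rho * A.2 * rho).

Lemma sdrevM A B : sdrev (sdmul A B) = sdmul (sdrev A) (sdrev B).
Proof. by apply: sdP => k /=; rewrite ?ffunE /= ?ffunE !permM !rhoE rev_ordK. Qed.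

Lemma sdrevV A : sdrev (sdinv A) = sdinv (sdrev A).
Proof.
have rhoAV : (rho * A.2 * rho)^-1 = rho * A.2^-1 * rho by rewrite !invMg rhoV mulgA.
by apply: sdP => k /=; rewrite ?ffunE /= ?ffunE rhoAV // !permM !rhoE rev_ordK.
Qed.

Lemma sdrevK : involutive sdrev.
Proof.
by move=> A; apply: sdP => k /=; rewrite ?ffunE ?rev_ordK // !permM !rhoE !rev_ordK.
Qed.

Definition sdrefl A : sd gT n := sdrev (sdinv A).

Lemma sdreflM A B : sdrefl (sdmul A B) = sdmul (sdrefl B) (sdrefl A).
Proof. by rewrite /sdrefl sdinvM sdrevM. Qed.

Lemma sdreflV A : sdrefl (sdinv A) = sdinv (sdrefl A).
Proof. by rewrite /sdrefl sdrevV. Qed.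

Lemma sdreflK : involutive sdrefl.
Proof. by move=> A; rewrite /sdrefl -sdrevV sdrevK sdinvK. Qed.

Lemma sdrefl1 : sdrefl (sd1 gT n) = sd1 gT n.
Proof.
apply: sdP => k /=; rewrite ?ffunE /= ?invg1 //.
by rewrite mulg1 permM perm1 !rhoE rev_ordK.
Qed.

Lemma bsd_robj j x : bsd (rev_ord j) (robj (bact j x)) = sdrefl (bsd j x).
Proof.
apply: sdP => k /=; rewrite ?ffunE /= ?ffunE ?tpermV.
  rewrite eq_lo_rev rev_ord_lo hi_eq_lo eqxx.
  have -> : (tperm (lo j) (hi j) (rev_ord k) == lo j) = (rev_ord k == hi j).
    by rewrite -[X in _ == X](tpermR (lo j) (hi j)) (inj_eq perm_inj).
  by case: ifP; rewrite ?invg1.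
rewrite !permM !rhoE.
case: (tpermP (lo (rev_ord j)) (hi (rev_ord j)) k) => [->|->|/eqP k_lo /eqP k_hi].
- by rewrite rev_ord_lo tpermR -(rev_ord_hi j) rev_ordK.
- by rewrite rev_ord_hi tpermL -(rev_ord_lo j) rev_ordK.
- rewrite eq_lo_rev in k_lo; rewrite eq_hi_rev in k_hi.
  by rewrite tpermD ?rev_ordK // eq_sym.
Qed.

Lemma letsd_robj l x : letsd (rletter l) (robj (letact l x)) = sdrefl (letsd l x).
Proof.
case: l => [[] j]; rewrite /letsd /letact /rletter /=; first exact: bsd_robj.
by rewrite sdreflV -bsd_robj bact_invK robj_bact_inv bactK.
Qed.

Lemma wsd_cat (u v : word n) x : wsd (u ++ v) x = sdmul (wsd u (wact v x)) (wsd v x).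
Proof.
elim: u => [|l u IHu] /=; first by rewrite sd1mul.
by rewrite IHu -wact_cat sdmulA.
Qed.

Lemma wsd_rword (w : word n) x : wsd (rword w) (robj (wact w x)) = sdrefl (wsd w x).
Proof.
elim: w => [|l w IHw] /=; first exact: esym sdrefl1.
by rewrite rword_cons -cats1 wsd_cat /= letact_robj IHw sdmul1 letsd_robj sdreflM.
Qed.

Lemma rmorE a b m (H : is_hom a b m) : rmor H = sdrefl m.
Proof.
rewrite /rmor; case/andP: (xchooseP H); set w := xchoose H => /eqP wb /eqP wm.
by rewrite -wb wsd_rword wm.
Qed.

Lemma is_hom_sdrefl a b m' : is_hom (robj b) (robj a) m' -> is_hom a b (sdrefl m').
Proof.
case=> w /andP[/eqP wb /eqP wm]; exists (rword w); apply/andP; split.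
  by rewrite -{1}(robjK a) -wb wact_rword robjK.
by rewrite -{1}(robjK a) -wb wsd_rword wm.
Qed.

End Reflection.

Theorem proposition2p21 (gT : finGroupType) (n : nat) :
  forall a b : obj gT n,
    (forall (m1 m2 : sd gT n) (H1 : is_hom a b m1) (H2 : is_hom a b m2),
        rmor H1 = rmor H2 -> m1 = m2) /\
    (forall m' : sd gT n, is_hom (robj b) (robj a) m' ->
        exists (m : sd gT n) (H : is_hom a b m), rmor H = m').
Proof.
move=> a b; split.
  move=> m1 m2 H1 H2; rewrite !rmorE.
  exact: (can_inj (@sdreflK gT n)).
move=> m' /is_hom_sdrefl H.
by exists (sdrefl m'), H; rewrite rmorE sdreflK.
Qed.
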